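(* Let $\mathbb{B}$ be a complete Boolean algebra. If ${\sf G}^{1}{\sf LC}^{cf}\vdash\Gamma\Rightarrow\Delta$, then for every semi ${\tt D}\mathbb{B}$-valuation $V$, $\inf\{\Box V(A):A\in\Gamma\}\le\sup\{\Diamond V(B):B\in\Delta\}$.
   Context: Calculus: second-order language with no relation or function symbols (first-order variables; for each $n\ge1$ countably many $n$-ary second-order variables; atomic formulas $X^n(t_1,\dots,t_n)$; connectives $\lnot,\lor,\land,\exists x,\forall x,\exists X^n,\forall X^n$). $Tm_0$ is the set of first-order terms, $Tm_1^{(n)}$ the set of $n$-ary abstracts $\lambda\vec x.G(x_1,\dots,x_n)$, and $F(T)$ is substitution of an abstract for a second-order variable (replacing $X(t_1,\dots,t_n)$ by $G(t_1,\dots,t_n)$). Sequents are pairs of finite sets of formulas. ${\sf G}^{1}{\sf LC}^{cf}$ is the cut-free sequent calculus with initial sequents $A,\Gamma\Rightarrow\Delta,A$ ($A$ atomic) and the rules: $(L\lnot)$ $\lnot F,\Gamma\Rightarrow\Delta,F$ / $\lnot F,\Gamma\Rightarrow\Delta$; $(R\lnot)$ $F,\Gamma\Rightarrow\Delta,\lnot F$ / $\Gamma\Rightarrow\Delta,\lnot F$; $(L\lor)$ $F_0,F_0\lor F_1,\Gamma\Rightarrow\Delta$ and $F_1,F_0\lor F_1,\Gamma\Rightarrow\Delta$ / $F_0\lor F_1,\Gamma\Rightarrow\Delta$; $(R\lor)$ $\Gamma\Rightarrow\Delta,F_0\lor F_1,F_i$ / $\Gamma\Rightarrow\Delta,F_0\lor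 F_1$; $(L\land)$ $F_i,F_0\land F_1,\Gamma\Rightarrow\Delta$ / $F_0\land F_1,\Gamma\Rightarrow\Delta$; $(R\land)$ $\Gamma\Rightarrow\Delta,F_0\land F_1,F_0$ and $\Gamma\Rightarrow\Delta,F_0\land F_1,F_1$ / $\Gamma\Rightarrow\Delta,F_0\land F_1$; first- and second-order quantifier rules $(L\exists),(R\forall)$ with eigenvariables not in the conclusion (premise contains $F(a)$ resp. $F(Y)$ together with the major formula) and $(R\exists),(L\forall)$ with premise containing an instance $F(t)$, $t\in Tm_0$, resp. $F(T)$, $T\in Tm_1^{(n)}$, together with the major formula. For a cBa $\mathbb{B}$: ${\tt D}\mathbb{B}=\{(a,b):a\le b\}$, ${\tt a}=(\Box{\tt a},\Diamond{\tt a})$, ${\tt a}\unlhd{\tt b}$ iff $\Box{\tt a}\le\Box{\tt b}$ and $\Diamond{\tt a}\ge\Diamond{\tt b}$, $-{\tt a}=(-\Diamond{\tt a},-\Box{\tt a})$, $\sup_<$ and $\inf_<$ computed componentwise. A semi ${\tt D}\mathbb{B}$-valuation is a map $V$ from formulas to ${\tt D}\mathbb{B}$ such that $V(\lnot F)\unlhd-V(F)$; $V(F_0\lor F_1)\unlhd\sup_<\{V(F_0),V(F_1)\}$; $V(F_0\land F_1)\unlhd\inf_<\{V(F_0),V(F_1)\}$; $V(\exists xF(x))\unlhd\sup_<\{V(F(t)):t\in Tm_0\}$; $V(\forall xF(x))\unlhd\inf_<\{V(F(t)):t\in Tm_0\}$; $V(\exists X^nF(X))\unlhd\sup_<\{V(F(T)):T\in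 Tm_1^{(n)}\}$; $V(\forall X^nF(X))\unlhd\inf_<\{V(F(T)):T\in Tm_1^{(n)}\}$. *)

From Stdlib Require Import List Arith.
Import ListNotations.

(* First-order variables are natural numbers (de Bruijn indices; an index
   beyond the enclosing first-order binders denotes a free variable).
   Since there are no function symbols, first-order terms = variables.
   A second-order variable of arity n (n >= 1) is a number X; in an atom
   [Atom X t ts] its arity is n = 1 + length ts and X is a de Bruijn index
   counting the enclosing second-order binders OF THE SAME ARITY (beyond
   those, it denotes a free second-order variable of arity n).
   Second-order quantifiers [SEx m F], [SAll m F] bind a variable of arity
   m+1 (so every arity n >= 1 is available and no arity 0 exists). *)
Inductive form : Type :=
| Atom (X : nat) (t : nat) (ts : list nat)
| Neg  (F : form)
| Or   (F0 F1 : form)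
| And  (F0 F1 : form)
| Ex   (F : form)
| All  (F : form)
| SEx  (m : nat) (F : form)
| SAll (m : nat) (F : form).

Definition is_atom (F : form) : Prop :=
  match F with Atom _ _ _ => True | _ => False end.

Definition Tm0 := nat.

Definition upF (s : nat -> nat) : nat -> nat :=
  fun i => match i with 0 => 0 | S j => S (s j) end.

Fixpoint fren (s : nat -> nat) (F : form) : form :=
  match F with
  | Atom X t ts => Atom X (s t) (map s ts)
  | Neg G => Neg (fren s G)
  | Or G H => Or (fren s G) (fren s H)
  | And G H => And (fren s G) (fren s H)
  | Ex G => Ex (fren (upF s) G)
  | All G => All (fren (upF s) G)
  | SEx m G => SEx m (fren s G)
  | SAll m G => SAll m (fren s G)
  end.

(* renaming of second-order variables: r n X = new index of the variable
   of arity n with index X *)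
Definition upSr (k : nat) (r : nat -> nat -> nat) : nat -> nat -> nat :=
  fun n X => if Nat.eqb n k then
               match X with 0 => 0 | S Y => S (r n Y) end
             else r n X.

Fixpoint sren (r : nat -> nat -> nat) (F : form) : form :=
  match F with
  | Atom X t ts => Atom (r (S (length ts)) X) t ts
  | Neg G => Neg (sren r G)
  | Or G H => Or (sren r G) (sren r H)
  | And G H => And (sren r G) (sren r H)
  | Ex G => Ex (sren r G)
  | All G => All (sren r G)
  | SEx m G => SEx m (sren (upSr (S m) r) G)
  | SAll m G => SAll m (sren (upSr (S m) r) G)
  end.

(* n-ary abstracts lambda x1..xn. G : a formula G in which the first-order
   variables 0..n-1 are the abstracted variables x1..xn (variable i-1 is x_i)
   and a first-order variable n+k denotes the outside variable k. *)
Definition Tm1 := form.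

Definition inst (n : nat) (G : Tm1) (args : list nat) : form :=
  fren (fun i => if Nat.ltb i n then nth i args 0 else i - n) G.

(* the abstract lambda x1..xn. X^n(x1,...,xn) *)
Definition var_abs (n X : nat) : Tm1 := Atom X 0 (List.seq 1 (pred n)).

(* simultaneous substitution of abstracts for second-order variables:
   s n X = abstract (of arity n) substituted for the variable (n, X) *)
Definition upS_F (s : nat -> nat -> Tm1) : nat -> nat -> Tm1 :=
  fun n X => fren (fun i => if Nat.ltb i n then i else S i) (s n X).

Definition upS_S (k : nat) (s : nat -> nat -> Tm1) : nat -> nat -> Tm1 :=
  fun n X =>
    let shift := sren (fun n' Y => if Nat.eqb n' k then S Y else Y) in
    if Nat.eqb n k then
      match X with 0 => var_abs n 0 | S Y => shift (s n Y) end
    else shift (s n X).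

Fixpoint ssubst (s : nat -> nat -> Tm1) (F : form) : form :=
  match F with
  | Atom X t ts => inst (S (length ts)) (s (S (length ts)) X) (t :: ts)
  | Neg G => Neg (ssubst s G)
  | Or G H => Or (ssubst s G) (ssubst s H)
  | And G H => And (ssubst s G) (ssubst s H)
  | Ex G => Ex (ssubst (upS_F s) G)
  | All G => All (ssubst (upS_F s) G)
  | SEx m G => SEx m (ssubst (upS_S (S m) s) G)
  | SAll m G => SAll m (ssubst (upS_S (S m) s) G)
  end.

Definition inst0 (F : form) (t : Tm0) : form :=
  fren (fun i => match i with 0 => t | S j => j end) F.

Definition inst1 (m : nat) (F : form) (T : Tm1) : form :=
  ssubst (fun n X => if Nat.eqb n (S m) then
                       match X with 0 => T | S Y => var_abs n Y end
                     else var_abs n X) F.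

Fixpoint fo_free (a : nat) (F : form) : Prop :=
  match F with
  | Atom _ t ts => t = a \/ In a ts
  | Neg G => fo_free a G
  | Or G H | And G H => fo_free a G \/ fo_free a H
  | Ex G | All G => fo_free (S a) G
  | SEx _ G | SAll _ G => fo_free a G
  end.

Fixpoint so_free (n Y : nat) (F : form) : Prop :=
  match F with
  | Atom X _ ts => S (length ts) = n /\ X = Y
  | Neg G => so_free n Y G
  | Or G H | And G H => so_free n Y G \/ so_free n Y H
  | Ex G | All G => so_free n Y G
  | SEx m G | SAll m G =>
      if Nat.eqb (S m) n then so_free n (S Y) G else so_free n Y G
  end.

(* The cut-free sequent calculus G^1LC^cf.  A sequent Gamma => Delta is a
   pair of finite sets, represented by lists (only membership matters).
   Every rule keeps its major formula in the premise, so "F, Gamma => Delta"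
   in a premise with conclusion "Gamma => Delta" (major formula in Gamma)
   is written [F :: Gamma]. *)
Inductive G1LC : list form -> list form -> Prop :=
| G_init A Γ Δ : is_atom A -> In A Γ -> In A Δ -> G1LC Γ Δ
| G_Lneg F Γ Δ : In (Neg F) Γ -> G1LC Γ (F :: Δ) -> G1LC Γ Δ
| G_Rneg F Γ Δ : In (Neg F) Δ -> G1LC (F :: Γ) Δ -> G1LC Γ Δ
| G_Lor F0 F1 Γ Δ : In (Or F0 F1) Γ ->
    G1LC (F0 :: Γ) Δ -> G1LC (F1 :: Γ) Δ -> G1LC Γ Δ
| G_Ror0 F0 F1 Γ Δ : In (Or F0 F1) Δ -> G1LC Γ (F0 :: Δ) -> G1LC Γ Δ
| G_Ror1 F0 F1 Γ Δ : In (Or F0 F1) Δ -> G1LC Γ (F1 :: Δ) -> G1LC Γ Δ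
| G_Land0 F0 F1 Γ Δ : In (And F0 F1) Γ -> G1LC (F0 :: Γ) Δ -> G1LC Γ Δ
| G_Land1 F0 F1 Γ Δ : In (And F0 F1) Γ -> G1LC (F1 :: Γ) Δ -> G1LC Γ Δ
| G_Rand F0 F1 Γ Δ : In (And F0 F1) Δ ->
    G1LC Γ (F0 :: Δ) -> G1LC Γ (F1 :: Δ) -> G1LC Γ Δ
| G_Lex F (a : Tm0) Γ Δ : In (Ex F) Γ ->
    (forall G, In G Γ \/ In G Δ -> ~ fo_free a G) ->
    G1LC (inst0 F a :: Γ) Δ -> G1LC Γ Δ
| G_Rex F (t : Tm0) Γ Δ : In (Ex F) Δ -> G1LC Γ (inst0 F t :: Δ) -> G1LC Γ Δ
| G_Lall F (t : Tm0) Γ Δ : In (All F) Γ -> G1LC (inst0 F t :: Γ) Δ -> G1LC Γ Δ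
| G_Rall F (a : Tm0) Γ Δ : In (All F) Δ ->
    (forall G, In G Γ \/ In G Δ -> ~ fo_free a G) ->
    G1LC Γ (inst0 F a :: Δ) -> G1LC Γ Δ
| G_LSex m F (Y : nat) Γ Δ : In (SEx m F) Γ ->
    (forall G, In G Γ \/ In G Δ -> ~ so_free (S m) Y G) ->
    G1LC (inst1 m F (var_abs (S m) Y) :: Γ) Δ -> G1LC Γ Δ
| G_RSex m F (T : Tm1) Γ Δ : In (SEx m F) Δ ->
    G1LC Γ (inst1 m F T :: Δ) -> G1LC Γ Δ
| G_LSall m F (T : Tm1) Γ Δ : In (SAll m F) Γ ->
    G1LC (inst1 m F T :: Γ) Δ -> G1LC Γ Δ
| G_RSall m F (Y : nat) Γ Δ : In (SAll m F) Δ ->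
    (forall G, In G Γ \/ In G Δ -> ~ so_free (S m) Y G) ->
    G1LC Γ (inst1 m F (var_abs (S m) Y) :: Δ) -> G1LC Γ Δ.

Record cBa : Type := CBa {
  car :> Type;
  le : car -> car -> Prop;
  sup : (car -> Prop) -> car;
  inf : (car -> Prop) -> car;
  compl : car -> car;
  le_refl : forall x, le x x;
  le_trans : forall x y z, le x y -> le y z -> le x z;
  le_antisym : forall x y, le x y -> le y x -> x = y;
  sup_ub : forall (P : car -> Prop) x, P x -> le x (sup P);
  sup_least : forall (P : car -> Prop) u, (forall x, P x -> le x u) -> le (sup P) u;
  inf_lb : forall (P : car -> Prop) x, P x -> le (inf P) x;
  inf_greatest : forall (P : car -> Prop) u, (forall x, P x -> le u x) -> le u (inf P);
  meet_join_distr : forall x y z,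
    inf (fun w => w = x \/ w = sup (fun v => v = y \/ v = z)) =
    sup (fun w => w = inf (fun v => v = x \/ v = y) \/
                  w = inf (fun v => v = x \/ v = z));
  compl_meet : forall x, inf (fun w => w = x \/ w = compl x) = sup (fun _ => False);
  compl_join : forall x, sup (fun w => w = x \/ w = compl x) = inf (fun _ => False)
}.

Section DB.
Variable B : cBa.

Definition DB : Type := { p : B * B | le B (fst p) (snd p) }.
Definition Box (a : DB) : B := fst (proj1_sig a).
Definition Dia (a : DB) : B := snd (proj1_sig a).

Definition pBox (p : B * B) := fst p.
Definition pDia (p : B * B) := snd p.
Definition pneg (a : DB) : B * B := (compl B (Dia a), compl B (Box a)).
Definition psup {I : Type} (f : I -> DB) : B * B :=
  (sup B (fun x => exists i, x = Box (f i)), sup B (fun x => exists i, x = Dia (f i))).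
Definition pinf {I : Type} (f : I -> DB) : B * B :=
  (inf B (fun x => exists i, x = Box (f i)), inf B (fun x => exists i, x = Dia (f i))).

Definition dle (a : DB) (q : B * B) : Prop :=
  le B (Box a) (pBox q) /\ le B (pDia q) (Dia a).

Definition semi_valuation (V : form -> DB) : Prop :=
  (forall F, dle (V (Neg F)) (pneg (V F))) /\
  (forall F0 F1, dle (V (Or F0 F1)) (psup (fun b : bool => V (if b then F1 else F0)))) /\
  (forall F0 F1, dle (V (And F0 F1)) (pinf (fun b : bool => V (if b then F1 else F0)))) /\
  (forall F, dle (V (Ex F)) (psup (fun t : Tm0 => V (inst0 F t)))) /\
  (forall F, dle (V (All F)) (pinf (fun t : Tm0 => V (inst0 F t)))) /\
  (forall m F, dle (V (SEx m F)) (psup (fun T : Tm1 => V (inst1 m F T)))) /\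
  (forall m F, dle (V (SAll m F)) (pinf (fun T : Tm1 => V (inst1 m F T)))).

End DB.
Arguments Box {B}.
Arguments Dia {B}.

(* Semi-valuations only bound V(F)
   from one side by the sup/inf of its components, which is exactly the
   direction each rule needs; the case splits are done with distributivity,
   and complements give the infinite distributive laws for the quantifiers.
   The eigenvariable rules need the premise at every instance F(t), not only
   at F(a), so the invariant proved is validity after every simultaneous
   substitution (σ, s) of first- and second-order variables: the substitution
   sending the fresh a to t (or Y to T) turns F(a) into F(t) and fixes the
   side formulas.  This rests on substitution commuting with instantiation
   ([inst0_sub], [inst1_sub]). *)

From Stdlib Require Import List Arith Lia FunctionalExtensionality.

(** * Simultaneous substitution *)

(* [σ] renames the first-order variables (terms are variables) and [s n X]
   is the abstract replacing the n-ary variable X. *)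
Fixpoint sub (σ : nat -> nat) (s : nat -> nat -> Tm1) (F : form) : form :=
  match F with
  | Atom X t ts => inst (S (length ts)) (s (S (length ts)) X) (σ t :: map σ ts)
  | Neg G => Neg (sub σ s G)
  | Or G H => Or (sub σ s G) (sub σ s H)
  | And G H => And (sub σ s G) (sub σ s H)
  | Ex G => Ex (sub (upF σ) (upS_F s) G)
  | All G => All (sub (upF σ) (upS_F s) G)
  | SEx m G => SEx m (sub σ (upS_S (S m) s) G)
  | SAll m G => SAll m (sub σ (upS_S (S m) s) G)
  end.

Definition args_ren (n : nat) (args : list nat) : nat -> nat :=
  fun i => if Nat.ltb i n then nth i args 0 else i - n.

Definition lift_ren (n : nat) (ρ : nat -> nat) : nat -> nat :=
  fun i => if Nat.ltb i n then i else n + ρ (i - n).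

Definition skip_ren (n : nat) : nat -> nat := fun i => if Nat.ltb i n then i else S i.

Definition shift_ren (n k : nat) : nat -> nat := fun i => if Nat.ltb i k then i else i + n.

Definition so_shift (k : nat) : nat -> nat -> nat :=
  fun n Y => if Nat.eqb n k then S Y else Y.

(* (σ, s) acting on an n-ary abstract: its n argument variables stay fixed,
   and the abstracts of s are moved past them. *)
Definition sub_abs (n : nat) (σ : nat -> nat) (s : nat -> nat -> Tm1) (T : Tm1) : Tm1 :=
  sub (lift_ren n σ) (fun k X => fren (shift_ren n k) (s k X)) T.

Definition scomp (σ : nat -> nat) (s s1 : nat -> nat -> Tm1) : nat -> nat -> Tm1 :=
  fun n X => sub_abs n σ s (s1 n X).

Lemma inst_args_ren n T args : inst n T args = fren (args_ren n args) T.
Proof. reflexivity. Qed.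

Lemma nth_map_lt (f : nat -> nat) l i :
  i < length l -> nth i (map f l) 0 = f (nth i l 0).
Proof. intro H. rewrite (nth_indep _ _ (f 0)) by (rewrite length_map; lia). apply map_nth. Qed.

Lemma upS_F_skip s n X : upS_F s n X = fren (skip_ren n) (s n X).
Proof. reflexivity. Qed.

Lemma upS_S_same_0 k s : upS_S k s k 0 = var_abs k 0.
Proof. unfold upS_S; cbv zeta; rewrite Nat.eqb_refl; reflexivity. Qed.

Lemma upS_S_same_S k s Y : upS_S k s k (S Y) = sren (so_shift k) (s k Y).
Proof. unfold upS_S; cbv zeta; rewrite Nat.eqb_refl; reflexivity. Qed.

Lemma upS_S_other k s n X : n <> k -> upS_S k s n X = sren (so_shift k) (s n X).
Proof. intro H; unfold upS_S; cbv zeta; apply Nat.eqb_neq in H; rewrite H; reflexivity. Qed.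

Lemma fren_fren F : forall f g, fren f (fren g F) = fren (fun i => f (g i)) F.
Proof.
  induction F; intros f g; simpl; rewrite ?IHF, ?IHF1, ?IHF2, ?map_map; try reflexivity.
  all: do 2 f_equal; apply functional_extensionality; intros [|i]; reflexivity.
Qed.

Lemma fren_id F : forall f, (forall i, f i = i) -> fren f F = F.
Proof.
  induction F; intros f Hf; simpl; rewrite ?IHF, ?IHF1, ?IHF2; auto.
  - rewrite Hf, (map_ext_in _ id), map_id; auto.
  - intros [|i]; simpl; auto.
  - intros [|i]; simpl; auto.
Qed.

Lemma fren_sren F : forall f r, fren f (sren r F) = sren r (fren f F).
Proof.
  induction F; intros f r; simpl; rewrite ?IHF, ?IHF1, ?IHF2, ?length_map; reflexivity.
Qed.

Lemma sren_sren F : forall a b, sren a (sren b F) = sren (fun n X => a n (b n X)) F.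
Proof.
  induction F; intros a b; simpl; rewrite ?IHF, ?IHF1, ?IHF2; try reflexivity.
  all: do 2 f_equal; do 2 (apply functional_extensionality; intro);
       unfold upSr; destruct (Nat.eqb _ _); [destruct x0|]; reflexivity.
Qed.

Lemma so_free_arity_pos F : forall n Y, so_free n Y F -> 1 <= n.
Proof.
  induction F; intros n Y H; simpl in H; try lia; try (destruct H; eauto; fail); eauto.
  all: destruct n; [apply IHF in H; lia | lia].
Qed.

Lemma so_free_SEx_same m G Y : so_free (S m) (S Y) G -> so_free (S m) Y (SEx m G).
Proof. simpl. rewrite Nat.eqb_refl. auto. Qed.

Lemma so_free_SAll_same m G Y : so_free (S m) (S Y) G -> so_free (S m) Y (SAll m G).
Proof. simpl. rewrite Nat.eqb_refl. auto. Qed.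

Lemma sub_ext_free F : forall σ σ' s s',
  (forall a, fo_free a F -> σ a = σ' a) ->
  (forall n X, so_free n X F -> s n X = s' n X) ->
  sub σ s F = sub σ' s' F.
Proof.
  induction F; intros σ σ' s s' Hσ Hs; simpl in *.
  { rewrite Hs, Hσ, (map_ext_in σ σ') by auto. reflexivity. }
  all: f_equal; first [apply IHF | apply IHF1 | apply IHF2]; auto.
  1,3: intros [|a] Ha; simpl; auto.
  1,2: intros n X HX; rewrite !upS_F_skip, Hs; auto.
  all: intros n X HX; destruct (Nat.eq_dec n (S m)) as [->|Hn];
       [destruct X; [rewrite !upS_S_same_0 | rewrite !upS_S_same_S, Hs]
       |rewrite !upS_S_other by auto; rewrite Hs]; auto.
  all: try (simpl; rewrite Nat.eqb_refl; auto).
  all: simpl; destruct n; auto; destruct (Nat.eqb_spec m n); [lia|auto].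
Qed.


Lemma sub_ext F σ σ' s s' :
  (forall a, σ a = σ' a) -> (forall n X, 1 <= n -> s n X = s' n X) ->
  sub σ s F = sub σ' s' F.
Proof.
  intros Hσ Hs; apply sub_ext_free; auto.
  intros n X H; apply Hs; eapply so_free_arity_pos; eauto.
Qed.

Lemma args_ren_lift n args ρ i : length args = n ->
  ρ (args_ren n args i) = args_ren n (map ρ args) (lift_ren n ρ i).
Proof.
  intro Hl; unfold args_ren, lift_ren.
  destruct (Nat.ltb_spec i n).
  - destruct (Nat.ltb_spec i n); [|lia]. rewrite nth_map_lt; auto; lia.
  - destruct (Nat.ltb_spec (n + ρ (i - n)) n); [lia|]. f_equal; lia.
Qed.

Lemma lift_args_ren_shift k n args i : lift_ren k (args_ren n args) (shift_ren n k i) = i.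
Proof.
  unfold args_ren, lift_ren, shift_ren.
  destruct (Nat.ltb_spec i k).
  - destruct (Nat.ltb_spec i k); lia.
  - destruct (Nat.ltb_spec (i + n) k); [lia|].
    destruct (Nat.ltb_spec (i + n - k) n); lia.
Qed.

Lemma lift_ren_skip k ρ i :
  lift_ren k (upF ρ) (skip_ren k i) = skip_ren k (lift_ren k ρ i).
Proof.
  unfold lift_ren, skip_ren.
  destruct (Nat.ltb_spec i k).
  - destruct (Nat.ltb_spec i k); [|lia]. destruct (Nat.ltb_spec i k); lia.
  - destruct (Nat.ltb_spec (S i) k); [lia|].
    replace (S i - k) with (S (i - k)) by lia. simpl.
    destruct (Nat.ltb_spec (k + ρ (i - k)) k); lia.
Qed.

Lemma fren_var_abs f n X : (forall i, i < n -> f i = i) -> 1 <= n ->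
  fren f (var_abs n X) = var_abs n X.
Proof.
  intros Hf H. unfold var_abs. simpl. rewrite Hf by lia. f_equal.
  rewrite (map_ext_in _ id), map_id; auto.
  intros a Ha. apply in_seq in Ha. apply Hf. destruct n; simpl in Ha; unfold id; lia.
Qed.

Lemma sren_var_abs r n X : 1 <= n -> sren r (var_abs n X) = var_abs n (r n X).
Proof.
  intro H. unfold var_abs. simpl. rewrite length_seq.
  replace (S (pred n)) with n by lia. reflexivity.
Qed.

Lemma fren_lift_upS_S ρ s m n X :
  fren (lift_ren n ρ) (upS_S (S m) s n X) =
  upS_S (S m) (fun k Y => fren (lift_ren k ρ) (s k Y)) n X.
Proof.
  destruct (Nat.eq_dec n (S m)) as [->|Hn].
  - destruct X.
    + rewrite !upS_S_same_0. apply fren_var_abs; [|lia].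
      intros i Hi. unfold lift_ren. destruct (Nat.ltb_spec i (S m)); lia.
    + rewrite !upS_S_same_S. apply fren_sren.
  - rewrite !upS_S_other by auto. apply fren_sren.
Qed.

Lemma fren_sub F : forall ρ σ s,
  fren ρ (sub σ s F) = sub (fun i => ρ (σ i)) (fun k X => fren (lift_ren k ρ) (s k X)) F.
Proof.
  induction F; intros ρ σ s; simpl; rewrite ?IHF, ?IHF1, ?IHF2; try reflexivity.
  { rewrite !inst_args_ren, !fren_fren. f_equal. apply functional_extensionality; intro i.
    replace (ρ (σ t) :: map (fun i => ρ (σ i)) ts) with (map ρ (σ t :: map σ ts))
      by (simpl; rewrite map_map; reflexivity).
    apply args_ren_lift. simpl; rewrite length_map; reflexivity. }
  1,2: do 2 f_equal;
    [ apply functional_extensionality; intros [|i]; reflexivity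
    | do 2 (apply functional_extensionality; intro); rewrite !upS_F_skip, !fren_fren;
      f_equal; apply functional_extensionality; intro; apply lift_ren_skip ].
  all: do 2 f_equal; do 2 (apply functional_extensionality; intro); apply fren_lift_upS_S.
Qed.

Lemma sub_fren F : forall σ s ρ, sub σ s (fren ρ F) = sub (fun i => σ (ρ i)) s F.
Proof.
  induction F; intros σ s ρ; simpl; rewrite ?IHF, ?IHF1, ?IHF2, ?length_map, ?map_map;
    try reflexivity.
  all: do 3 f_equal; apply functional_extensionality; intros [|i]; reflexivity.
Qed.

Lemma sren_upS_S r s m n X :
  sren (upSr (S m) r) (upS_S (S m) s n X) = upS_S (S m) (fun k Y => sren r (s k Y)) n X.
Proof.
  destruct (Nat.eq_dec n (S m)) as [->|Hn].
  - destruct X.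
    + rewrite !upS_S_same_0, sren_var_abs by lia. unfold upSr. rewrite Nat.eqb_refl. reflexivity.
    + rewrite !upS_S_same_S, !sren_sren. f_equal.
      do 2 (apply functional_extensionality; intro). unfold upSr, so_shift.
      destruct (Nat.eqb _ (S m)); reflexivity.
  - rewrite !upS_S_other, !sren_sren by auto. f_equal.
    do 2 (apply functional_extensionality; intro). unfold upSr, so_shift.
    destruct (Nat.eqb _ (S m)); reflexivity.
Qed.

Lemma sren_sub F : forall r σ s, sren r (sub σ s F) = sub σ (fun k X => sren r (s k X)) F.
Proof.
  induction F; intros r σ s; simpl; rewrite ?IHF, ?IHF1, ?IHF2; try reflexivity.
  { rewrite !inst_args_ren. symmetry; apply fren_sren. }
  all: do 2 f_equal; do 2 (apply functional_extensionality; intro).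
  1,2: rewrite !upS_F_skip; symmetry; apply fren_sren.
  all: apply sren_upS_S.
Qed.

Lemma sub_sren F : forall r σ s, sub σ s (sren r F) = sub σ (fun k X => s k (r k X)) F.
Proof.
  induction F; intros r σ s; simpl; rewrite ?IHF, ?IHF1, ?IHF2; try reflexivity.
  all: do 2 f_equal; do 2 (apply functional_extensionality; intro).
  all: unfold upS_S, upSr; cbv zeta; destruct (Nat.eqb _ (S m)); [destruct x0|]; reflexivity.
Qed.

Lemma sub_abs_var_abs n σ s Y : 1 <= n -> sub_abs n σ s (var_abs n Y) = s n Y.
Proof.
  intro H. unfold sub_abs, var_abs. simpl. rewrite length_seq.
  replace (S (pred n)) with n by lia.
  rewrite inst_args_ren, fren_fren. apply fren_id.
  intro i. unfold shift_ren, args_ren.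
  destruct (Nat.ltb_spec i n).
  - destruct (Nat.ltb_spec i n); [|lia].
    replace (lift_ren n σ 0 :: map (lift_ren n σ) (seq 1 (pred n)))
      with (map (lift_ren n σ) (seq 0 n)) by (destruct n; [lia|reflexivity]).
    rewrite nth_map_lt by (rewrite length_seq; lia).
    rewrite seq_nth by lia. simpl. unfold lift_ren. destruct (Nat.ltb_spec i n); lia.
  - destruct (Nat.ltb_spec (i + n) n); lia.
Qed.

Lemma sub_abs_so_shift n σ s K T :
  sub_abs n σ (upS_S K s) (sren (so_shift K) T) = sren (so_shift K) (sub_abs n σ s T).
Proof.
  unfold sub_abs. rewrite sub_sren, sren_sub. f_equal.
  do 2 (apply functional_extensionality; intro).
  destruct (Nat.eq_dec x K) as [->|Hn].
  - unfold so_shift at 1. rewrite Nat.eqb_refl, upS_S_same_S. apply fren_sren.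
  - unfold so_shift at 1. apply Nat.eqb_neq in Hn as Hb. rewrite Hb, upS_S_other by auto.
    apply fren_sren.
Qed.

Lemma scomp_upF σ s s1 k X :
  scomp (upF σ) (upS_F s) (upS_F s1) k X = upS_F (scomp σ s s1) k X.
Proof.
  unfold scomp, sub_abs. rewrite !upS_F_skip, sub_fren, fren_sub. f_equal.
  - apply functional_extensionality; intro i. unfold lift_ren, skip_ren.
    destruct (Nat.ltb_spec i k).
    + destruct (Nat.ltb_spec i k); [|lia]. destruct (Nat.ltb_spec i k); lia.
    + destruct (Nat.ltb_spec (S i) k); [lia|].
      destruct (Nat.ltb_spec (k + σ (i - k)) k); [lia|].
      replace (S i - k) with (S (i - k)) by lia. simpl. lia.
  - do 2 (apply functional_extensionality; intro). rewrite upS_F_skip, !fren_fren. f_equal.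
    apply functional_extensionality; intro i. unfold shift_ren, lift_ren, skip_ren.
    destruct (Nat.ltb_spec i x).
    + destruct (Nat.ltb_spec i x); [|lia]. destruct (Nat.ltb_spec i x); lia.
    + destruct (Nat.ltb_spec (S i) x); [lia|].
      destruct (Nat.ltb_spec (i + k) x); [lia|].
      destruct (Nat.ltb_spec (i + k - x) k); lia.
Qed.

Lemma scomp_upS σ s s1 K n X : 1 <= n -> 1 <= K ->
  scomp σ (upS_S K s) (upS_S K s1) n X = upS_S K (scomp σ s s1) n X.
Proof.
  intros Hn HK. unfold scomp.
  destruct (Nat.eq_dec n K) as [->|Hne].
  - destruct X.
    + rewrite !upS_S_same_0, sub_abs_var_abs by lia. apply upS_S_same_0.
    + rewrite !upS_S_same_S. apply sub_abs_so_shift.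
  - rewrite !upS_S_other by auto. apply sub_abs_so_shift.
Qed.

Lemma sub_sub F : forall σ s σ1 s1,
  sub σ s (sub σ1 s1 F) = sub (fun i => σ (σ1 i)) (scomp σ s s1) F.
Proof.
  induction F; intros σ s σ1 s1; simpl; rewrite ?IHF, ?IHF1, ?IHF2; try reflexivity.
  { rewrite inst_args_ren, sub_fren. unfold scomp at 1. rewrite inst_args_ren.
    unfold sub_abs. rewrite fren_sub. f_equal.
    - apply functional_extensionality; intro i.
      replace (σ (σ1 t) :: map (fun i => σ (σ1 i)) ts) with (map σ (σ1 t :: map σ1 ts))
        by (simpl; rewrite map_map; reflexivity).
      apply args_ren_lift. simpl; rewrite length_map; reflexivity.
    - do 2 (apply functional_extensionality; intro).
      rewrite fren_fren. symmetry. apply fren_id. intro i. apply lift_args_ren_shift. }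
  1,2: do 2 f_equal;
    [ apply functional_extensionality; intros [|i]; reflexivity
    | do 2 (apply functional_extensionality; intro); apply scomp_upF ].
  all: f_equal; apply sub_ext; auto; intros; apply scomp_upS; lia.
Qed.

Lemma map_nth_seq0 ts : map (fun a => nth a ts 0) (seq 0 (length ts)) = ts.
Proof.
  induction ts; simpl; auto. f_equal. rewrite <- seq_shift, map_map. exact IHts.
Qed.

Lemma upS_S_var_abs m s n X : (forall k Y, 1 <= k -> s k Y = var_abs k Y) -> 1 <= n ->
  upS_S (S m) s n X = var_abs n X.
Proof.
  intros Hs Hn. destruct (Nat.eq_dec n (S m)) as [->|Hne].
  - destruct X; [apply upS_S_same_0|].
    rewrite upS_S_same_S, Hs, sren_var_abs by lia. unfold so_shift. rewrite Nat.eqb_refl.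
    reflexivity.
  - rewrite upS_S_other, Hs, sren_var_abs by auto. unfold so_shift.
    apply Nat.eqb_neq in Hne. rewrite Hne. reflexivity.
Qed.

Lemma sub_id F : forall σ s, (forall i, σ i = i) ->
  (forall n X, 1 <= n -> s n X = var_abs n X) -> sub σ s F = F.
Proof.
  induction F; intros σ s Hσ Hs; simpl; rewrite ?IHF, ?IHF1, ?IHF2; auto.
  { rewrite Hs by lia. unfold var_abs. simpl. rewrite inst_args_ren. simpl. rewrite Hσ.
    rewrite (map_ext_in σ id), map_id by auto. f_equal.
    rewrite <- seq_shift, map_map.
    transitivity (map (fun a => nth a ts 0) (seq 0 (length ts))); [|apply map_nth_seq0].
    apply map_ext_in. intros a Ha. apply in_seq in Ha. unfold args_ren.
    destruct (Nat.ltb_spec (S a) (S (length ts))); [reflexivity|lia]. }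
  1,3: intros [|i]; simpl; auto.
  1,2: intros n X Hn; rewrite upS_F_skip, Hs by auto; apply fren_var_abs; auto;
       intros i Hi; unfold skip_ren; destruct (Nat.ltb_spec i n); lia.
  all: intros n X Hn; apply upS_S_var_abs; auto.
Qed.

Lemma ssubst_sub F : forall σ s, (forall i, σ i = i) -> ssubst s F = sub σ s F.
Proof.
  induction F; intros σ s Hσ; simpl; erewrite ?IHF, ?IHF1, ?IHF2; eauto.
  { rewrite Hσ, (map_ext_in σ id), map_id by auto. reflexivity. }
  all: intros [|i]; simpl; auto.
Qed.

Lemma inst0_sub F t σ s :
  sub σ s (inst0 F t) = inst0 (sub (upF σ) (upS_F s) F) (σ t).
Proof.
  unfold inst0. rewrite sub_fren, fren_sub. f_equal.
  - apply functional_extensionality; intros [|i]; reflexivity.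
  - do 2 (apply functional_extensionality; intro). rewrite upS_F_skip, fren_fren.
    symmetry. apply fren_id. intro i. unfold lift_ren, skip_ren.
    destruct (Nat.ltb_spec i x).
    + destruct (Nat.ltb_spec i x); lia.
    + destruct (Nat.ltb_spec (S i) x); [lia|].
      replace (S i - x) with (S (i - x)) by lia. lia.
Qed.

Lemma sub_abs_unshift n K s U : 1 <= K ->
  (forall Y, s K (S Y) = var_abs K Y) -> (forall k Z, k <> K -> s k Z = var_abs k Z) ->
  sub_abs n (fun i => i) s (sren (so_shift K) U) = U.
Proof.
  intros HK HsK Hs. unfold sub_abs. rewrite sub_sren. apply sub_id.
  - intro i. unfold lift_ren. destruct (Nat.ltb_spec i n); lia.
  - intros k Z Hk. unfold so_shift. destruct (Nat.eq_dec k K) as [->|Hne].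
    + rewrite Nat.eqb_refl, HsK. apply fren_var_abs; auto. intros i Hi. unfold shift_ren.
      destruct (Nat.ltb_spec i K); lia.
    + apply Nat.eqb_neq in Hne as Hb. rewrite Hb, Hs by auto.
      apply fren_var_abs; auto. intros i Hi. unfold shift_ren.
      destruct (Nat.ltb_spec i k); lia.
Qed.

Lemma inst1_sub m F T σ s :
  sub σ s (inst1 m F T) = inst1 m (sub σ (upS_S (S m) s) F) (sub_abs (S m) σ s T).
Proof.
  unfold inst1. rewrite !(ssubst_sub _ (fun i => i)) by auto. rewrite !sub_sub.
  apply sub_ext; [reflexivity|]. intros n X Hn. unfold scomp.
  assert (Hunshift : forall U, sub_abs n (fun i => i)
    (fun k Y => if Nat.eqb k (S m) then match Y with 0 => sub_abs (S m) σ s T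
                                        | S Z => var_abs k Z end
                else var_abs k Y) (sren (so_shift (S m)) U) = U).
  { intro U. apply sub_abs_unshift; [lia| |].
    - intro Y. rewrite Nat.eqb_refl. reflexivity.
    - intros k Z Hk. apply Nat.eqb_neq in Hk. rewrite Hk. reflexivity. }
  destruct (Nat.eq_dec n (S m)) as [->|Hne].
  - rewrite Nat.eqb_refl. destruct X.
    + rewrite upS_S_same_0, sub_abs_var_abs, Nat.eqb_refl by lia. reflexivity.
    + rewrite upS_S_same_S, sub_abs_var_abs by lia. symmetry. apply Hunshift.
  - apply Nat.eqb_neq in Hne as Hb. rewrite Hb, upS_S_other, sub_abs_var_abs by (auto; lia).
    symmetry. apply Hunshift.
Qed.

Definition fupd (σ : nat -> nat) (a t : nat) : nat -> nat :=
  fun i => if Nat.eqb i a then t else σ i.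

Definition supd (s : nat -> nat -> Tm1) (K Y : nat) (T : Tm1) : nat -> nat -> Tm1 :=
  fun k Z => if andb (Nat.eqb k K) (Nat.eqb Z Y) then T else s k Z.

Lemma sub_fupd_notin G a t σ s : ~ fo_free a G -> sub (fupd σ a t) s G = sub σ s G.
Proof.
  intro H. apply sub_ext_free; auto. intros b Hb. unfold fupd.
  destruct (Nat.eqb_spec b a); [subst; contradiction|reflexivity].
Qed.

Lemma sub_supd_notin G K Y T σ s : ~ so_free K Y G -> sub σ (supd s K Y T) G = sub σ s G.
Proof.
  intro H. apply sub_ext_free; auto. intros n X Hb. unfold supd.
  destruct (Nat.eqb_spec n K); destruct (Nat.eqb_spec X Y); simpl; subst; auto; contradiction.
Qed.

Lemma sub_fupd_inst0 F a t σ s : ~ fo_free (S a) F ->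
  sub (fupd σ a t) s (inst0 F a) = inst0 (sub (upF σ) (upS_F s) F) t.
Proof.
  intro H. rewrite inst0_sub. unfold fupd at 2. rewrite Nat.eqb_refl. f_equal.
  apply sub_ext_free; auto. intros [|b] Hb; simpl; auto. unfold fupd.
  destruct (Nat.eqb_spec b a); [subst; contradiction|reflexivity].
Qed.

Lemma sub_supd_inst1 m F Y T σ s : ~ so_free (S m) (S Y) F ->
  sub σ (supd s (S m) Y T) (inst1 m F (var_abs (S m) Y)) =
  inst1 m (sub σ (upS_S (S m) s) F) T.
Proof.
  intro H. rewrite inst1_sub, sub_abs_var_abs by lia.
  unfold supd at 2. rewrite !Nat.eqb_refl. simpl. f_equal.
  apply sub_ext_free; auto. intros n X Hb.
  destruct (Nat.eq_dec n (S m)) as [->|Hne].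
  - destruct X; [rewrite !upS_S_same_0; reflexivity|]. rewrite !upS_S_same_S. f_equal.
    unfold supd. rewrite Nat.eqb_refl.
    destruct (Nat.eqb_spec X Y); [subst; contradiction|reflexivity].
  - rewrite !upS_S_other by auto. f_equal. unfold supd.
    destruct (Nat.eqb_spec n (S m)); [contradiction|reflexivity].
Qed.

(** * Complete Boolean algebras *)

Section CompleteBooleanAlgebra.
Variable B : cBa.

Definition meet (x y : B) : B := inf B (fun w => w = x \/ w = y).
Definition join (x y : B) : B := sup B (fun w => w = x \/ w = y).

Lemma meet_lel x y : le B (meet x y) x. Proof. apply inf_lb; auto. Qed.
Lemma meet_ler x y : le B (meet x y) y. Proof. apply inf_lb; auto. Qed.

Lemma meet_greatest x y z : le B z x -> le B z y -> le B z (meet x y).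
Proof. intros; apply inf_greatest; intros w [-> | ->]; auto. Qed.

Lemma join_gel x y : le B x (join x y). Proof. apply sup_ub; auto. Qed.
Lemma join_ger x y : le B y (join x y). Proof. apply sup_ub; auto. Qed.

Lemma join_least x y z : le B x z -> le B y z -> le B (join x y) z.
Proof. intros; apply sup_least; intros w [-> | ->]; auto. Qed.

Lemma meetC_le x y : le B (meet x y) (meet y x).
Proof. apply meet_greatest; [apply meet_ler | apply meet_lel]. Qed.

Lemma meet_le_mono x y x' y' : le B x x' -> le B y y' -> le B (meet x y) (meet x' y').
Proof.
  intros; apply meet_greatest; [apply le_trans with x | apply le_trans with y];
    auto using meet_lel, meet_ler.
Qed.

Lemma meet_compl_le x y : le B (meet x (compl B x)) y.
Proof. unfold meet. rewrite compl_meet. apply sup_least; tauto. Qed.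

Lemma le_join_compl x y : le B x (join y (compl B y)).
Proof. unfold join. rewrite compl_join. apply inf_greatest; tauto. Qed.

Lemma le_join_cases x a b s :
  le B x (join a b) -> le B (meet x a) s -> le B (meet x b) s -> le B x s.
Proof.
  intros Hx Ha Hb. apply le_trans with (meet x (join a b)).
  - apply meet_greatest; auto using le_refl.
  - unfold meet at 1, join at 1. rewrite meet_join_distr. apply join_least; auto.
Qed.

(* Infinite distributivity is not an axiom of [cBa]; it comes from
   complements: every p in P lies below [join (compl x) s]. *)
Lemma le_sup_cases x (P : B -> Prop) s :
  le B x (sup B P) -> (forall p, P p -> le B (meet x p) s) -> le B x s.
Proof.
  intros Hx Hp.
  assert (HP : le B (sup B P) (join (compl B x) s)).
  { apply sup_least. intros p Pp. apply (le_join_cases p x (compl B x)).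
    - apply le_join_compl.
    - eapply le_trans; [apply meetC_le|]. eapply le_trans; [apply Hp; auto|apply join_ger].
    - eapply le_trans; [apply meet_ler|apply join_gel]. }
  apply (le_join_cases x (compl B x) s).
  - eapply le_trans; eauto.
  - apply meet_compl_le.
  - apply meet_ler.
Qed.

Lemma le_inf_cases x (P : B -> Prop) s :
  (forall p, P p -> le B x (join p s)) -> le B (inf B P) s -> le B x s.
Proof.
  intros Hp Hs.
  assert (HP : le B (meet x (compl B s)) (inf B P)).
  { apply inf_greatest. intros p Pp. apply (le_join_cases _ p s).
    - eapply le_trans; [apply meet_lel|]. auto.
    - apply meet_ler.
    - eapply le_trans; [|apply (meet_compl_le s p)]. apply meet_greatest; [apply meet_ler|].
      eapply le_trans; [apply meet_lel|apply meet_ler]. }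
  apply (le_join_cases x s (compl B s)).
  - apply le_join_compl.
  - apply meet_ler.
  - eapply le_trans; eauto.
Qed.

End CompleteBooleanAlgebra.

(** * Soundness *)

Definition box_inf (B : cBa) (W : form -> DB B) (Γ : list form) : B :=
  inf B (fun x => exists A, In A Γ /\ x = Box (W A)).

Definition dia_sup (B : cBa) (W : form -> DB B) (Δ : list form) : B :=
  sup B (fun x => exists C, In C Δ /\ x = Dia (W C)).

Section Sequents.
Variable B : cBa.
Implicit Types (W : form -> DB B) (Γ Δ : list form).

Lemma box_inf_le W Γ A : In A Γ -> le B (box_inf B W Γ) (Box (W A)).
Proof. intro; apply inf_lb; eauto. Qed.

Lemma le_dia_sup W Δ C : In C Δ -> le B (Dia (W C)) (dia_sup B W Δ).
Proof. intro; apply sup_ub; eauto. Qed.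

Lemma box_inf_agree W W' Γ : (forall G, In G Γ -> W' G = W G) ->
  le B (box_inf B W Γ) (box_inf B W' Γ).
Proof.
  intro H. apply inf_greatest. intros x [A [HA ->]]. rewrite H by auto. apply box_inf_le; auto.
Qed.

Lemma dia_sup_agree W W' Δ : (forall G, In G Δ -> W' G = W G) ->
  le B (dia_sup B W' Δ) (dia_sup B W Δ).
Proof.
  intro H. apply sup_least. intros x [A [HA ->]]. rewrite H by auto. apply le_dia_sup; auto.
Qed.

Lemma box_inf_cons W W' Γ F : (forall G, In G Γ -> W' G = W G) ->
  le B (meet B (Box (W' F)) (box_inf B W Γ)) (box_inf B W' (F :: Γ)).
Proof.
  intro H. apply inf_greatest. intros x [A [[<- | HA] ->]]; [apply meet_lel|].
  eapply le_trans; [apply meet_ler|]. rewrite H by auto. apply box_inf_le; auto.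
Qed.

Lemma dia_sup_cons W W' Δ F : (forall G, In G Δ -> W' G = W G) ->
  le B (dia_sup B W' (F :: Δ)) (join B (Dia (W' F)) (dia_sup B W Δ)).
Proof.
  intro H. apply sup_least. intros x [A [[<- | HA] ->]]; [apply join_gel|].
  eapply le_trans; [|apply join_ger]. rewrite H by auto. apply le_dia_sup; auto.
Qed.

End Sequents.

Section Soundness.
Variables (B : cBa) (V : form -> DB B).
Hypothesis V_Neg : forall F, dle B (V (Neg F)) (pneg B (V F)).
Hypothesis V_Or : forall F0 F1,
  dle B (V (Or F0 F1)) (psup B (fun b : bool => V (if b then F1 else F0))).
Hypothesis V_And : forall F0 F1,
  dle B (V (And F0 F1)) (pinf B (fun b : bool => V (if b then F1 else F0))).
Hypothesis V_Ex : forall F, dle B (V (Ex F)) (psup B (fun t : Tm0 => V (inst0 F t))).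
Hypothesis V_All : forall F, dle B (V (All F)) (pinf B (fun t : Tm0 => V (inst0 F t))).
Hypothesis V_SEx : forall m F,
  dle B (V (SEx m F)) (psup B (fun T : Tm1 => V (inst1 m F T))).
Hypothesis V_SAll : forall m F,
  dle B (V (SAll m F)) (pinf B (fun T : Tm1 => V (inst1 m F T))).

Definition Vsub (σ : nat -> nat) (s : nat -> nat -> Tm1) : form -> DB B := fun F => V (sub σ s F).

Definition valid (Γ Δ : list form) : Prop :=
  forall σ s, le B (box_inf B (Vsub σ s) Γ) (dia_sup B (Vsub σ s) Δ).

Lemma valid_shared A Γ Δ : In A Γ -> In A Δ -> valid Γ Δ.
Proof.
  intros HΓ HΔ σ s. eapply le_trans; [apply box_inf_le, HΓ|].
  eapply le_trans; [exact (proj2_sig (Vsub σ s A)) | apply le_dia_sup, HΔ].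
Qed.

Lemma valid_left M F Γ Δ : In M Γ ->
  (forall σ s, le B (Box (Vsub σ s M)) (Box (Vsub σ s F))) ->
  valid (F :: Γ) Δ -> valid Γ Δ.
Proof.
  intros HM HF HP σ s. eapply le_trans; [|apply HP].
  eapply le_trans; [|apply box_inf_cons; reflexivity].
  apply meet_greatest; [|apply le_refl].
  eapply le_trans; [apply box_inf_le, HM | apply HF].
Qed.

Lemma valid_right M F Γ Δ : In M Δ ->
  (forall σ s, le B (Dia (Vsub σ s F)) (Dia (Vsub σ s M))) ->
  valid Γ (F :: Δ) -> valid Γ Δ.
Proof.
  intros HM HF HP σ s. eapply le_trans; [apply HP|].
  eapply le_trans; [apply dia_sup_cons; reflexivity|].
  apply join_least; [|apply le_refl].
  eapply le_trans; [apply HF | apply le_dia_sup, HM].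
Qed.

Lemma Vsub_agree σ s σ' s' Γ Δ :
  (forall G, In G Γ \/ In G Δ -> sub σ' s' G = sub σ s G) ->
  (forall G, In G Γ -> Vsub σ' s' G = Vsub σ s G) /\
  (forall G, In G Δ -> Vsub σ' s' G = Vsub σ s G).
Proof. intro H; split; intros; unfold Vsub; rewrite H; auto. Qed.

Lemma valid_left_eigen M F Γ Δ : In M Γ ->
  (forall σ s, le B (Box (Vsub σ s M)) (sup B (fun p => exists σ' s',
     (forall G, In G Γ \/ In G Δ -> sub σ' s' G = sub σ s G) /\ p = Box (Vsub σ' s' F)))) ->
  valid (F :: Γ) Δ -> valid Γ Δ.
Proof.
  intros HM HF HP σ s. eapply le_sup_cases; [eapply le_trans; [apply box_inf_le, HM | apply HF]|].
  intros p (σ' & s' & Hagree & ->).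
  destruct (Vsub_agree _ _ _ _ _ _ Hagree) as [HΓ HΔ].
  eapply le_trans; [apply meetC_le|].
  eapply le_trans; [apply box_inf_cons, HΓ|].
  eapply le_trans; [apply (HP σ' s') | apply dia_sup_agree, HΔ].
Qed.

Lemma valid_right_eigen M F Γ Δ : In M Δ ->
  (forall σ s, le B (inf B (fun p => exists σ' s',
     (forall G, In G Γ \/ In G Δ -> sub σ' s' G = sub σ s G) /\ p = Dia (Vsub σ' s' F)))
     (Dia (Vsub σ s M))) ->
  valid Γ (F :: Δ) -> valid Γ Δ.
Proof.
  intros HM HF HP σ s. eapply le_inf_cases; [|eapply le_trans; [apply HF | apply le_dia_sup, HM]].
  intros p (σ' & s' & Hagree & ->).
  destruct (Vsub_agree _ _ _ _ _ _ Hagree) as [HΓ HΔ].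
  eapply le_trans; [apply box_inf_agree, HΓ|].
  eapply le_trans; [apply (HP σ' s') | apply dia_sup_cons, HΔ].
Qed.

Lemma box_And_le F0 F1 (b : bool) :
  le B (Box (V (And F0 F1))) (Box (V (if b then F1 else F0))).
Proof. eapply le_trans; [apply (proj1 (V_And F0 F1)) | apply inf_lb; eauto]. Qed.

Lemma dia_Or_ge F0 F1 (b : bool) :
  le B (Dia (V (if b then F1 else F0))) (Dia (V (Or F0 F1))).
Proof. eapply le_trans; [|apply (proj2 (V_Or F0 F1))]. apply sup_ub; eauto. Qed.

Lemma box_All_le F t : le B (Box (V (All F))) (Box (V (inst0 F t))).
Proof. eapply le_trans; [apply (proj1 (V_All F)) | apply inf_lb; eauto]. Qed.

Lemma dia_Ex_ge F t : le B (Dia (V (inst0 F t))) (Dia (V (Ex F))).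
Proof. eapply le_trans; [|apply (proj2 (V_Ex F))]. apply sup_ub; eauto. Qed.

Lemma box_SAll_le m F T : le B (Box (V (SAll m F))) (Box (V (inst1 m F T))).
Proof. eapply le_trans; [apply (proj1 (V_SAll m F)) | apply inf_lb; eauto]. Qed.

Lemma dia_SEx_ge m F T : le B (Dia (V (inst1 m F T))) (Dia (V (SEx m F))).
Proof. eapply le_trans; [|apply (proj2 (V_SEx m F))]. apply sup_ub; eauto. Qed.

Lemma valid_Lneg F Γ Δ : In (Neg F) Γ -> valid Γ (F :: Δ) -> valid Γ Δ.
Proof.
  intros HM HP σ s.
  apply (le_join_cases B _ (Dia (Vsub σ s F)) (dia_sup B (Vsub σ s) Δ)).
  - eapply le_trans; [apply HP | apply dia_sup_cons; reflexivity].
  - eapply le_trans; [|apply (meet_compl_le B (Dia (Vsub σ s F)))].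
    eapply le_trans; [apply meetC_le|]. apply meet_le_mono; [apply le_refl|].
    eapply le_trans; [apply box_inf_le, HM | apply (proj1 (V_Neg (sub σ s F)))].
  - apply meet_ler.
Qed.

Lemma valid_Rneg F Γ Δ : In (Neg F) Δ -> valid (F :: Γ) Δ -> valid Γ Δ.
Proof.
  intros HM HP σ s.
  apply (le_join_cases B _ (Box (Vsub σ s F)) (compl B (Box (Vsub σ s F)))).
  - apply le_join_compl.
  - eapply le_trans; [apply meetC_le|].
    eapply le_trans; [apply box_inf_cons; reflexivity | apply HP].
  - eapply le_trans; [apply meet_ler|].
    eapply le_trans; [apply (proj2 (V_Neg (sub σ s F)))|].
    exact (le_dia_sup B (Vsub σ s) Δ _ HM).
Qed.

Lemma valid_Lor F0 F1 Γ Δ : In (Or F0 F1) Γ ->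
  valid (F0 :: Γ) Δ -> valid (F1 :: Γ) Δ -> valid Γ Δ.
Proof.
  intros HM HP0 HP1 σ s.
  apply (le_join_cases B _ (Box (Vsub σ s F0)) (Box (Vsub σ s F1))).
  - eapply le_trans; [apply box_inf_le, HM|].
    eapply le_trans; [apply (proj1 (V_Or (sub σ s F0) (sub σ s F1)))|].
    apply sup_least. intros x [[|] ->]; [apply join_ger | apply join_gel].
  - eapply le_trans; [apply meetC_le|].
    eapply le_trans; [apply box_inf_cons; reflexivity | apply HP0].
  - eapply le_trans; [apply meetC_le|].
    eapply le_trans; [apply box_inf_cons; reflexivity | apply HP1].
Qed.

Lemma valid_Rand F0 F1 Γ Δ : In (And F0 F1) Δ ->
  valid Γ (F0 :: Δ) -> valid Γ (F1 :: Δ) -> valid Γ Δ.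
Proof.
  intros HM HP0 HP1 σ s. set (x := box_inf B (Vsub σ s) Γ).
  apply (le_join_cases B _ (Dia (Vsub σ s F0)) (dia_sup B (Vsub σ s) Δ));
    [eapply le_trans; [apply HP0 | apply dia_sup_cons; reflexivity] | | apply meet_ler].
  apply (le_join_cases B _ (Dia (Vsub σ s F1)) (dia_sup B (Vsub σ s) Δ));
    [eapply le_trans; [apply meet_lel|];
     eapply le_trans; [apply HP1 | apply dia_sup_cons; reflexivity] | | apply meet_ler].
  eapply le_trans; [|apply le_dia_sup, HM].
  eapply le_trans; [|apply (proj2 (V_And (sub σ s F0) (sub σ s F1)))].
  apply inf_greatest. intros y [[|] ->]; [apply meet_ler|].
  eapply le_trans; [apply meet_lel | apply meet_ler].
Qed.

Lemma valid_Land0 F0 F1 Γ Δ : In (And F0 F1) Γ -> valid (F0 :: Γ) Δ -> valid Γ Δ.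
Proof. intro HM. apply (valid_left _ _ _ _ HM). intros; apply (box_And_le _ _ false). Qed.

Lemma valid_Land1 F0 F1 Γ Δ : In (And F0 F1) Γ -> valid (F1 :: Γ) Δ -> valid Γ Δ.
Proof. intro HM. apply (valid_left _ _ _ _ HM). intros; apply (box_And_le _ _ true). Qed.

Lemma valid_Ror0 F0 F1 Γ Δ : In (Or F0 F1) Δ -> valid Γ (F0 :: Δ) -> valid Γ Δ.
Proof. intro HM. apply (valid_right _ _ _ _ HM). intros; apply (dia_Or_ge _ _ false). Qed.

Lemma valid_Ror1 F0 F1 Γ Δ : In (Or F0 F1) Δ -> valid Γ (F1 :: Δ) -> valid Γ Δ.
Proof. intro HM. apply (valid_right _ _ _ _ HM). intros; apply (dia_Or_ge _ _ true). Qed.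

Lemma valid_Lall F t Γ Δ : In (All F) Γ -> valid (inst0 F t :: Γ) Δ -> valid Γ Δ.
Proof.
  intro HM. apply (valid_left _ _ _ _ HM). intros σ s. unfold Vsub. rewrite inst0_sub.
  apply box_All_le.
Qed.

Lemma valid_Rex F t Γ Δ : In (Ex F) Δ -> valid Γ (inst0 F t :: Δ) -> valid Γ Δ.
Proof.
  intro HM. apply (valid_right _ _ _ _ HM). intros σ s. unfold Vsub. rewrite inst0_sub.
  apply dia_Ex_ge.
Qed.

Lemma valid_LSall m F T Γ Δ : In (SAll m F) Γ -> valid (inst1 m F T :: Γ) Δ -> valid Γ Δ.
Proof.
  intro HM. apply (valid_left _ _ _ _ HM). intros σ s. unfold Vsub. rewrite inst1_sub.
  apply box_SAll_le.
Qed.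

Lemma valid_RSex m F T Γ Δ : In (SEx m F) Δ -> valid Γ (inst1 m F T :: Δ) -> valid Γ Δ.
Proof.
  intro HM. apply (valid_right _ _ _ _ HM). intros σ s. unfold Vsub. rewrite inst1_sub.
  apply dia_SEx_ge.
Qed.

Lemma valid_Lex F a Γ Δ : In (Ex F) Γ ->
  (forall G, In G Γ \/ In G Δ -> ~ fo_free a G) ->
  valid (inst0 F a :: Γ) Δ -> valid Γ Δ.
Proof.
  intros HM Ha. apply (valid_left_eigen _ _ _ _ HM). intros σ s.
  eapply le_trans; [exact (proj1 (V_Ex (sub (upF σ) (upS_F s) F)))|].
  apply sup_least. intros p [t ->]. apply sup_ub. exists (fupd σ a t), s. split.
  - intros G HG. apply sub_fupd_notin, Ha, HG.
  - unfold Vsub. rewrite sub_fupd_inst0; [reflexivity|]. apply (Ha (Ex F)); auto.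
Qed.

Lemma valid_Rall F a Γ Δ : In (All F) Δ ->
  (forall G, In G Γ \/ In G Δ -> ~ fo_free a G) ->
  valid Γ (inst0 F a :: Δ) -> valid Γ Δ.
Proof.
  intros HM Ha. apply (valid_right_eigen _ _ _ _ HM). intros σ s.
  eapply le_trans; [|exact (proj2 (V_All (sub (upF σ) (upS_F s) F)))].
  apply inf_greatest. intros p [t ->]. apply inf_lb. exists (fupd σ a t), s. split.
  - intros G HG. apply sub_fupd_notin, Ha, HG.
  - unfold Vsub. rewrite sub_fupd_inst0; [reflexivity|]. apply (Ha (All F)); auto.
Qed.

Lemma valid_LSex m F Y Γ Δ : In (SEx m F) Γ ->
  (forall G, In G Γ \/ In G Δ -> ~ so_free (S m) Y G) ->
  valid (inst1 m F (var_abs (S m) Y) :: Γ) Δ -> valid Γ Δ.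
Proof.
  intros HM HY. apply (valid_left_eigen _ _ _ _ HM). intros σ s.
  eapply le_trans; [exact (proj1 (V_SEx m (sub σ (upS_S (S m) s) F)))|].
  apply sup_least. intros p [T ->]. apply sup_ub. exists σ, (supd s (S m) Y T). split.
  - intros G HG. apply sub_supd_notin, HY, HG.
  - unfold Vsub. rewrite sub_supd_inst1; [reflexivity|].
    intro HF. apply (HY (SEx m F)); auto. apply so_free_SEx_same, HF.
Qed.

Lemma valid_RSall m F Y Γ Δ : In (SAll m F) Δ ->
  (forall G, In G Γ \/ In G Δ -> ~ so_free (S m) Y G) ->
  valid Γ (inst1 m F (var_abs (S m) Y) :: Δ) -> valid Γ Δ.
Proof.
  intros HM HY. apply (valid_right_eigen _ _ _ _ HM). intros σ s.
  eapply le_trans; [|exact (proj2 (V_SAll m (sub σ (upS_S (S m) s) F)))].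
  apply inf_greatest. intros p [T ->]. apply inf_lb. exists σ, (supd s (S m) Y T). split.
  - intros G HG. apply sub_supd_notin, HY, HG.
  - unfold Vsub. rewrite sub_supd_inst1; [reflexivity|].
    intro HF. apply (HY (SAll m F)); auto. apply so_free_SAll_same, HF.
Qed.

Lemma G1LC_valid Γ Δ : G1LC Γ Δ -> valid Γ Δ.
Proof.
  induction 1; eauto using valid_shared, valid_Lneg, valid_Rneg, valid_Lor, valid_Ror0,
    valid_Ror1, valid_Land0, valid_Land1, valid_Rand, valid_Lex, valid_Rex, valid_Lall,
    valid_Rall, valid_LSex, valid_RSex, valid_LSall, valid_RSall.
Qed.

End Soundness.

Theorem mainTheorem3 (B : cBa) (Γ Δ : list form) :
  G1LC Γ Δ ->
  forall V : form -> DB B, semi_valuation B V ->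
    le B (inf B (fun x => exists A, In A Γ /\ x = Box (V A)))
         (sup B (fun x => exists C, In C Δ /\ x = Dia (V C))).
Proof.
  intros HD V (HNeg & HOr & HAnd & HEx & HAll & HSEx & HSAll).
  assert (HV : Vsub B V (fun i => i) var_abs = V).
  { apply functional_extensionality. intro F. unfold Vsub. rewrite sub_id; auto. }
  pose proof (G1LC_valid B V HNeg HOr HAnd HEx HAll HSEx HSAll Γ Δ HD (fun i => i) var_abs)
    as Hvalid.
  rewrite HV in Hvalid. exact Hvalid.
Qed.
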